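(* Let $n\ge1$ be an integer, $p\in(0,1)$, with all notation as in the context. Then for all real $x$, $$Q_n^{\mathrm{Lin,LC}}\Big(x+\frac12\Big)=Q(x):=\begin{cases}Q_n^{\mathrm{Interp}}(x;j)&\text{if } x\in\delta_j \text{ for some } j\in\mathbb{Z}\cap[j_*,n],\\ Q_n^{\mathrm{Lin}}\big(x+\frac12\big)&\text{otherwise.}\end{cases}$$
   Context: $q:=1-p$; $B_n$ is binomial with parameters $n,p$; $Q_n(x):=\mathbf{P}(B_n\ge x)$; $q_j:=Q_n(j)$, $p_j:=q_j-q_{j+1}=\binom nj p^jq^{n-j}$ for $j\in\mathbb{Z}$; $j_*:=\lfloor(n+1)p\rfloor+1$. $Q_n^{\mathrm{Lin}}$ is the linear interpolation of $Q_n$ over $\mathbb{Z}$, i.e. $Q_n^{\mathrm{Lin}}(x)=(1-(x-j))q_j+(x-j)q_{j+1}$ for $j\le x\le j+1$, $j\in\mathbb{Z}$; $Q_n^{\mathrm{Lin,LC}}$ is the least log-concave majorant of $Q_n^{\mathrm{Lin}}$ on $\mathbb{R}$ (smallest $g\ge Q_n^{\mathrm{Lin}}$ with $g\ge0$ and $\ln g$ concave, values $-\infty$ allowed). For integers $j_*\le j\le n$, $x_j:=j-\frac12+\frac{q_j}{p_j}+\big(\frac{q_j}{p_{j-1}}-\frac{q_j}{p_j}\big)/\ln\frac{p_{j-1}}{p_j}$ and $y_j:=j-\frac12+\frac{q_j}{p_{j-1}}+\big(\frac{q_j}{p_{j-1}}-\frac{q_j}{p_j}\big)/\ln\frac{p_{j-1}}{p_j}$;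 for integers $j\ge n+1$, $x_j:=j+\frac12$, $y_j:=j-\frac12$. For integers $j\ge j_*$, $\delta_j:=(y_j,x_j)$ (a nonempty open interval), and for $x\in\delta_j$, $$Q_n^{\mathrm{Interp}}(x;j):=Q_n^{\mathrm{Lin}}\big(y_j+\tfrac12\big)^{1-\delta}\,Q_n^{\mathrm{Lin}}\big(x_j+\tfrac12\big)^{\delta},\qquad\delta:=\frac{x-y_j}{x_j-y_j}.$$ *)

From Stdlib Require Import Reals Lra Lia ZArith.
Open Scope R_scope.

Definition pmf (n : nat) (p : R) (j : Z) : R :=
  if (Z.leb 0 j && Z.leb j (Z.of_nat n))%bool
  then C n (Z.to_nat j) * p ^ (Z.to_nat j) * (1 - p) ^ (n - Z.to_nat j)
  else 0.

Definition qtail (n : nat) (p : R) (j : Z) : R :=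
  sum_f_R0 (fun k => if Z.leb j (Z.of_nat k) then pmf n p (Z.of_nat k) else 0) n.

Definition QLin (n : nat) (p : R) (x : R) : R :=
  let j := Int_part x in
  (1 - (x - IZR j)) * qtail n p j + (x - IZR j) * qtail n p (j + 1).

(* a^t with the convention 0^t = 0 (used only for t in (0,1)). *)
Definition powr (a t : R) : R := if Req_EM_T a 0 then 0 else Rpower a t.

(* g >= 0 with ln g concave (ln 0 = -oo allowed). *)
Definition log_concave (g : R -> R) : Prop :=
  (forall x, 0 <= g x) /\
  forall x y t, 0 < t < 1 ->
    powr (g x) t * powr (g y) (1 - t) <= g (t * x + (1 - t) * y).

Definition LC_majorant (f g : R -> R) : Prop :=
  log_concave g /\ forall x, f x <= g x.

Definition least_LC_majorant (f G : R -> R) : Prop :=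
  LC_majorant f G /\ forall g, LC_majorant f g -> forall x, G x <= g x.

Definition jstar (n : nat) (p : R) : Z := (Int_part (INR (n + 1) * p) + 1)%Z.

Definition xj (n : nat) (p : R) (j : Z) : R :=
  if Z.leb j (Z.of_nat n) then
    IZR j - 1/2 + qtail n p j / pmf n p j
    + (qtail n p j / pmf n p (j - 1) - qtail n p j / pmf n p j)
      / ln (pmf n p (j - 1) / pmf n p j)
  else IZR j + 1/2.

Definition yj (n : nat) (p : R) (j : Z) : R :=
  if Z.leb j (Z.of_nat n) then
    IZR j - 1/2 + qtail n p j / pmf n p (j - 1)
    + (qtail n p j / pmf n p (j - 1) - qtail n p j / pmf n p j)
      / ln (pmf n p (j - 1) / pmf n p j)
  else IZR j - 1/2.

Definition in_delta (n : nat) (p : R) (j : Z) (x : R) : Prop :=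
  yj n p j < x < xj n p j.

Definition QInterp (n : nat) (p : R) (x : R) (j : Z) : R :=
  let d := (x - yj n p j) / (xj n p j - yj n p j) in
  powr (QLin n p (yj n p j + 1/2)) (1 - d) * powr (QLin n p (xj n p j + 1/2)) d.

(* Beyond the mode (j_* <= j <= n) the pmf decreases, so [ln QLin] is convex at the integer j;
   there it is replaced by its bitangent, which touches it at y_j + 1/2 in (j-1, j) and at
   x_j + 1/2 in (j, j+1) with slope -1/M_j, where M_j = (q_j / p_j) L(p_j / p_(j-1)) and L(r) is
   the logarithmic mean of r and 1.  Log-concavity of the pmf and of the tail q makes the M_j
   decrease, so these intervals are disjoint, and below the mode QLin is concave at the integers;
   hence the glued function has a decreasing supergradient and a concave logarithm on (-oo, n+1).
   It is the least log-concave majorant because any log-concave majorant dominates, on each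
   bitangent interval, the geometric interpolation of QLin at the two points of tangency. *)

From Stdlib Require Import Reals ZArith Lra Lia ClassicalEpsilon.
Open Scope R_scope.

Lemma exp_le_compat x y : x <= y -> exp x <= exp y.
Proof. intros [H|H]; [left; apply exp_increasing; lra|subst; lra]. Qed.

Lemma ln_lt_0 r : 0 < r < 1 -> ln r < 0.
Proof. intros H. rewrite <- ln_1. apply ln_increasing; lra. Qed.

Lemma ln_le_sub1 x : 0 < x -> ln x <= x - 1.
Proof. intros H. pose proof (exp_ineq1_le (ln x)). rewrite exp_ln in H0; lra. Qed.

Lemma ln_lt_sub1 x : 0 < x -> x <> 1 -> ln x < x - 1.
Proof.
  intros H1 H2. assert (ln x <> 0) by (apply ln_neq_0; auto).
  pose proof (exp_ineq1 (ln x) H). rewrite exp_ln in H0; lra.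
Qed.

Lemma ln_sub_le_div x y : 0 < x -> 0 < y -> ln y - ln x <= (y - x) / x.
Proof.
  intros Hx Hy. pose proof (ln_le_sub1 (y / x) ltac:(apply Rdiv_lt_0_compat; lra)) as H.
  unfold Rdiv in H. rewrite ln_mult, ln_Rinv in H by (try apply Rinv_0_lt_compat; lra).
  replace ((y - x) / x) with (y * / x - 1) by (field; lra). lra.
Qed.

Lemma Int_part_bounds t : IZR (Int_part t) <= t < IZR (Int_part t) + 1.
Proof. destruct (base_Int_part t). lra. Qed.

Lemma Int_part_eq t k : IZR k <= t < IZR k + 1 -> Int_part t = k.
Proof. intros H. symmetry. apply Int_part_spec. lra. Qed.

Definition logmean (r : R) : R := (1 - r) / - ln r.

Lemma logmean_bounds r : 0 < r < 1 -> r < logmean r < 1.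
Proof.
  intros Hr. pose proof (ln_lt_0 r Hr) as Hln. unfold logmean.
  assert (Hinv : ln (/ r) < / r - 1).
  { apply ln_lt_sub1. apply Rinv_0_lt_compat; lra.
    intros E. rewrite <- (Rinv_inv r), E, Rinv_1 in Hr. lra. }
  rewrite ln_Rinv in Hinv by lra.
  split; apply Rmult_lt_reg_r with (- ln r); try lra;
    unfold Rdiv; rewrite Rmult_assoc, Rinv_l by lra.
  - assert (r * - ln r < r * (/ r - 1)) by (apply Rmult_lt_compat_l; lra).
    replace (r * (/ r - 1)) with (1 - r) in H by (field; lra). lra.
  - pose proof (ln_lt_sub1 r ltac:(lra) ltac:(lra)). lra.
Qed.

Lemma exp_tangent c x : exp c * (1 + x - c) <= exp x.
Proof.
  replace x with (c + (x - c)) at 2 by ring. rewrite exp_plus.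
  pose proof (exp_ineq1_le (x - c)). pose proof (exp_pos c). nra.
Qed.

Lemma logmean_le r' r : 0 < r' <= r -> r < 1 -> logmean r' <= logmean r.
Proof.
  intros H1 H2. destruct (Req_dec r' r) as [E|E]; [subst; lra|].
  set (A := - ln r). set (A' := - ln r').
  assert (HA : 0 < A) by (unfold A; pose proof (ln_lt_0 r ltac:(lra)); lra).
  assert (HAA : A < A') by (unfold A, A'; pose proof (ln_increasing r' r ltac:(lra) ltac:(lra)); lra).
  assert (Er : exp (- A) = r) by (unfold A; rewrite Ropp_involutive; apply exp_ln; lra).
  assert (Er' : exp (- A') = r') by (unfold A'; rewrite Ropp_involutive; apply exp_ln; lra).
  set (l := A / A').
  assert (Hl : 0 < l < 1).
  { unfold l. split. apply Rdiv_lt_0_compat; lra.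
    apply Rmult_lt_reg_r with A'. lra. unfold Rdiv. rewrite Rmult_assoc, Rinv_l by lra. lra. }
  assert (HlA : l * A' = A) by (unfold l; field; lra).
  (* convexity of [exp]: [- A = l * (- A') + (1 - l) * 0] *)
  assert (Hconv : r <= l * r' + (1 - l)).
  { pose proof (exp_tangent (- A) (- A')) as T1. pose proof (exp_tangent (- A) 0) as T2.
    rewrite exp_0, Er, Er' in *. nra. }
  unfold logmean. fold A A'.
  unfold Rdiv. apply Rmult_le_reg_r with (A * A'). nra.
  replace ((1 - r') * / A' * (A * A')) with ((1 - r') * A) by (field; lra).
  replace ((1 - r) * / A * (A * A')) with ((1 - r) * A') by (field; lra).
  rewrite <- HlA. nra.
Qed.

Section Supergradient.

Variables f D : R -> R.

Definition supergrad_pair (z w : R) : Prop :=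
  D w <= D z /\ D w * (w - z) <= f w - f z /\ f w - f z <= D z * (w - z).

Definition supergrad_on (x y : R) : Prop :=
  forall z w, x <= z -> z < w -> w <= y -> supergrad_pair z w.

Lemma supergrad_pair_trans z m w :
  z < m -> m < w -> supergrad_pair z m -> supergrad_pair m w -> supergrad_pair z w.
Proof.
  unfold supergrad_pair. intros H1 H2 (A1 & B1 & C1) (A2 & B2 & C2). split; [lra|split].
  - assert (D w * (m - z) <= D m * (m - z)) by (apply Rmult_le_compat_r; lra). nra.
  - assert (D m * (w - m) <= D z * (w - m)) by (apply Rmult_le_compat_r; lra). nra.
Qed.

Lemma supergrad_on_glue x m y :
  supergrad_on x m -> supergrad_on m y -> supergrad_on x y.
Proof.
  intros Hl Hr z w Hz Hzw Hw.
  destruct (Rle_or_lt w m) as [Hwm|Hmw]; [apply Hl; lra|].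
  destruct (Rle_or_lt m z) as [Hmz|Hzm]; [apply Hr; lra|].
  apply supergrad_pair_trans with m; [lra|lra|apply Hl|apply Hr]; lra.
Qed.

Lemma supergrad_concave c :
  (forall z w, z < w -> w < c -> supergrad_pair z w) ->
  forall x y t, 0 < t < 1 -> x < c -> y < c ->
  t * f x + (1 - t) * f y <= f (t * x + (1 - t) * y).
Proof.
  intros Hsg x y t Ht Hx Hy. set (z := t * x + (1 - t) * y).
  assert (Hsup : forall a, a < c -> f a <= f z + D z * (a - z)).
  { intros a Ha. destruct (Rtotal_order a z) as [L|[L|L]].
    - destruct (Hsg a z L ltac:(unfold z in *; nra)) as (_ & B & _). lra.
    - subst. lra.
    - destruct (Hsg z a L Ha) as (_ & _ & C). lra. }
  pose proof (Hsup x Hx). pose proof (Hsup y Hy).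
  assert (t * f x <= t * (f z + D z * (x - z))) by (apply Rmult_le_compat_l; lra).
  assert ((1 - t) * f y <= (1 - t) * (f z + D z * (y - z))) by (apply Rmult_le_compat_l; lra).
  assert (t * (f z + D z * (x - z)) + (1 - t) * (f z + D z * (y - z)) = f z) by (unfold z; ring).
  lra.
Qed.

End Supergradient.

Lemma supergrad_pair_ln_affine c m z w :
  0 <= m -> z < w -> 0 < c - m * w ->
  supergrad_pair (fun t => ln (c - m * t)) (fun t => - m / (c - m * t)) z w.
Proof.
  intros Hm Hzw Hw. assert (Hz : c - m * w <= c - m * z) by nra.
  pose proof (ln_sub_le_div (c - m * z) (c - m * w) ltac:(lra) Hw) as U.
  pose proof (ln_sub_le_div (c - m * w) (c - m * z) Hw ltac:(lra)) as V.
  split; [|split].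
  - unfold Rdiv. rewrite !Ropp_mult_distr_l_reverse. apply Ropp_le_contravar.
    apply Rmult_le_compat_l; auto. apply Rinv_le_contravar; lra.
  - replace (- m / (c - m * w) * (w - z)) with (- ((c - m * z - (c - m * w)) / (c - m * w)))
      by (field; lra). lra.
  - replace (- m / (c - m * z) * (w - z)) with ((c - m * w - (c - m * z)) / (c - m * z))
      by (field; lra). lra.
Qed.

Lemma supergrad_pair_transfer f D g E z w :
  z < w -> f z = g z -> f w = g w -> D z = E z -> D w <= E w ->
  supergrad_pair g E z w -> supergrad_pair f D z w.
Proof.
  unfold supergrad_pair. intros Hzw -> -> -> Hw (A & B & C). split; [lra|split; [|lra]].
  assert (D w * (w - z) <= E w * (w - z)) by (apply Rmult_le_compat_r; lra). lra.
Qed.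

Lemma log_concave_of_ln_concave (g : R -> R) (c : R) :
  (forall t, t < c -> 0 < g t) -> (forall t, c <= t -> g t = 0) ->
  (forall x y t, 0 < t < 1 -> x < c -> y < c ->
     t * ln (g x) + (1 - t) * ln (g y) <= ln (g (t * x + (1 - t) * y))) ->
  log_concave g.
Proof.
  intros Hpos Hzero Hconc.
  assert (Hge0 : forall t, 0 <= g t).
  { intros t. destruct (Rlt_or_le t c); [left; auto|right; symmetry; auto]. }
  assert (Hlt : forall t, g t <> 0 -> t < c).
  { intros t Ht. destruct (Rlt_or_le t c) as [H|H]; [auto|now destruct Ht; apply Hzero]. }
  split; [exact Hge0|]. intros x y t Ht. unfold powr.
  destruct (Req_EM_T (g x) 0) as [_|Ex]; [rewrite Rmult_0_l; apply Hge0|].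
  destruct (Req_EM_T (g y) 0) as [_|Ey]; [rewrite Rmult_0_r; apply Hge0|].
  pose proof (Hlt x Ex). pose proof (Hlt y Ey).
  rewrite <- (exp_ln (g (t * x + (1 - t) * y))) by (apply Hpos; nra).
  unfold Rpower. rewrite <- exp_plus. apply exp_le_compat.
  pose proof (Hconc x y t Ht H H0). lra.
Qed.

Lemma log_concave_ge_interp (g : R -> R) a b A B d :
  log_concave g -> 0 < A <= g a -> 0 < B <= g b -> 0 < d < 1 ->
  exp ((1 - d) * ln A + d * ln B) <= g ((1 - d) * a + d * b).
Proof.
  intros [_ Hlc] HA HB Hd.
  specialize (Hlc b a d Hd). unfold powr in Hlc.
  destruct (Req_EM_T (g b) 0); [lra|]. destruct (Req_EM_T (g a) 0); [lra|].
  replace ((1 - d) * a + d * b) with (d * b + (1 - d) * a) by ring.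
  eapply Rle_trans; [|apply Hlc].
  replace (exp ((1 - d) * ln A + d * ln B)) with (Rpower B d * Rpower A (1 - d))
    by (unfold Rpower; rewrite <- exp_plus; f_equal; ring).
  apply Rmult_le_compat; try (left; apply exp_pos); apply Rle_Rpower_l; lra.
Qed.

Lemma sum_f_R0_point (h : Z -> R) (j : Z) (m : nat) :
  sum_f_R0 (fun k => if Z.eqb (Z.of_nat k) j then h (Z.of_nat k) else 0) m =
  if (Z.leb 0 j && Z.leb j (Z.of_nat m))%bool then h j else 0.
Proof.
  induction m as [|m IH].
  - cbn [sum_f_R0]. destruct (Z.eqb_spec (Z.of_nat 0) j); destruct (Z.leb_spec 0 j);
      destruct (Z.leb_spec j (Z.of_nat 0)); simpl in *; subst; try lia; reflexivity.
  - rewrite tech5, IH.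
    destruct (Z.eqb_spec (Z.of_nat (S m)) j); destruct (Z.leb_spec 0 j);
      destruct (Z.leb_spec j (Z.of_nat m)); destruct (Z.leb_spec j (Z.of_nat (S m)));
      cbn [andb]; try lia; try lra; subst; lra.
Qed.

Section BinomialTail.

Variables (n : nat) (p : R).
Hypothesis Hp : 0 < p < 1.

Lemma pmf_outside j : (j < 0 \/ Z.of_nat n < j)%Z -> pmf n p j = 0.
Proof.
  intros H; unfold pmf.
  destruct (Z.leb_spec 0 j); destruct (Z.leb_spec j (Z.of_nat n)); simpl; lia || reflexivity.
Qed.

Lemma pmf_of_nat k : (k <= n)%nat -> pmf n p (Z.of_nat k) = C n k * p ^ k * (1 - p) ^ (n - k).
Proof.
  intros Hk. unfold pmf. rewrite Nat2Z.id.
  destruct (Z.leb_spec 0 (Z.of_nat k)); destruct (Z.leb_spec (Z.of_nat k) (Z.of_nat n));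
    simpl; lia || reflexivity.
Qed.

Lemma pmf_gt0 j : (0 <= j <= Z.of_nat n)%Z -> 0 < pmf n p j.
Proof.
  intros H. replace j with (Z.of_nat (Z.to_nat j)) by lia. rewrite pmf_of_nat by lia.
  assert (0 < C n (Z.to_nat j)).
  { unfold C. apply Rdiv_lt_0_compat; [|apply Rmult_lt_0_compat]; apply INR_fact_lt_0. }
  apply Rmult_lt_0_compat; [apply Rmult_lt_0_compat|]; auto; apply pow_lt; lra.
Qed.

Lemma pmf_ge0 j : 0 <= pmf n p j.
Proof.
  destruct (Z_le_dec 0 j); [destruct (Z_le_dec j (Z.of_nat n))|].
  - left. apply pmf_gt0. lia.
  - right. symmetry. apply pmf_outside. lia.
  - right. symmetry. apply pmf_outside. lia.
Qed.

Lemma qtail_succ j : qtail n p j = pmf n p j + qtail n p (j + 1).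
Proof.
  unfold qtail.
  replace (pmf n p j) with
    (sum_f_R0 (fun k => if Z.eqb (Z.of_nat k) j then pmf n p (Z.of_nat k) else 0) n).
  2:{ rewrite sum_f_R0_point.
      destruct (Z.leb_spec 0 j); destruct (Z.leb_spec j (Z.of_nat n)); simpl; try reflexivity;
        symmetry; apply pmf_outside; lia. }
  rewrite <- sum_plus. apply sum_eq. intros k _.
  destruct (Z.eqb_spec (Z.of_nat k) j); destruct (Z.leb_spec j (Z.of_nat k));
    destruct (Z.leb_spec (j + 1) (Z.of_nat k)); subst; try lia; lra.
Qed.

Lemma qtail_gt_n j : (Z.of_nat n < j)%Z -> qtail n p j = 0.
Proof.
  intros H. unfold qtail. rewrite <- (sum_eq (fun _ => 0)).
  - clear H. induction n as [|m IH]; simpl; lra.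
  - intros k Hk. destruct (Z.leb_spec j (Z.of_nat k)); [lia|reflexivity].
Qed.

Lemma qtail_nonpos j : (j <= 0)%Z -> qtail n p j = 1.
Proof.
  intros H. unfold qtail.
  rewrite <- (pow1 n). replace 1 with (p + (1 - p)) at 1 by ring. rewrite binomial.
  apply sum_eq. intros k Hk. destruct (Z.leb_spec j (Z.of_nat k)); [|lia].
  apply pmf_of_nat; auto.
Qed.

Lemma qtail_ge0 j : 0 <= qtail n p j.
Proof.
  unfold qtail. apply cond_pos_sum. intros k.
  destruct (Z.leb j (Z.of_nat k)); [apply pmf_ge0|lra].
Qed.

Lemma qtail_antitone j k : (j <= k)%Z -> qtail n p k <= qtail n p j.
Proof.
  intros H. replace k with (j + Z.of_nat (Z.to_nat (k - j)))%Z by lia.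
  induction (Z.to_nat (k - j)) as [|m IH]; [rewrite Z.add_0_r; lra|].
  rewrite Nat2Z.inj_succ, Z.add_succ_r, <- Z.add_1_r, (qtail_succ (j + Z.of_nat m)) in *.
  pose proof (pmf_ge0 (j + Z.of_nat m)). lra.
Qed.

Lemma qtail_gt0 j : (j <= Z.of_nat n)%Z -> 0 < qtail n p j.
Proof.
  intros H. eapply Rlt_le_trans; [|apply (qtail_antitone j (Z.of_nat n) H)].
  rewrite qtail_succ, (qtail_gt_n (Z.of_nat n + 1)) by lia.
  pose proof (pmf_gt0 (Z.of_nat n) ltac:(lia)). lra.
Qed.

Lemma pmf_ratio j : (1 <= j <= Z.of_nat n)%Z ->
  pmf n p j * IZR j * (1 - p) = pmf n p (j - 1) * (INR n - IZR j + 1) * p.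
Proof.
  intros H. set (k := Z.to_nat (j - 1)).
  replace j with (Z.of_nat (S k)) by lia. replace (Z.of_nat (S k) - 1)%Z with (Z.of_nat k) by lia.
  rewrite <- !INR_IZR_INZ, !pmf_of_nat, pascal_step3 by lia.
  replace (n - k)%nat with (S (n - S k)) by lia. rewrite S_INR, minus_INR by lia.
  simpl pow. rewrite S_INR. unfold Rdiv.
  assert (INR k + 1 <> 0) by (rewrite <- S_INR; apply not_0_INR; lia).
  field. auto.
Qed.

Lemma pmf_pred_le k : (1 <= k <= Z.of_nat n)%Z -> IZR k <= INR (n + 1) * p ->
  pmf n p (k - 1) <= pmf n p k.
Proof.
  intros Hk Hmode. pose proof (pmf_ratio k Hk) as R. rewrite plus_INR in Hmode. simpl in Hmode.
  assert (Hkn : IZR k <= INR n) by (rewrite INR_IZR_INZ; apply IZR_le; lia).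
  assert (Hpos : 0 < (INR n - IZR k + 1) * p) by (apply Rmult_lt_0_compat; lra).
  apply Rmult_le_reg_r with ((INR n - IZR k + 1) * p); [exact Hpos|].
  assert (0 <= pmf n p k * ((INR n - IZR k + 1) * p - IZR k * (1 - p)))
    by (apply Rmult_le_pos; [apply pmf_ge0|lra]).
  nra.
Qed.

Lemma pmf_lt_pred k : (1 <= k <= Z.of_nat n)%Z -> INR (n + 1) * p < IZR k ->
  pmf n p k < pmf n p (k - 1).
Proof.
  intros Hk Hmode. pose proof (pmf_ratio k Hk) as R. rewrite plus_INR in Hmode. simpl in Hmode.
  assert (Hkn : IZR k <= INR n) by (rewrite INR_IZR_INZ; apply IZR_le; lia).
  assert (Hpos : 0 < (INR n - IZR k + 1) * p) by (apply Rmult_lt_0_compat; lra).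
  apply Rmult_lt_reg_r with ((INR n - IZR k + 1) * p); [exact Hpos|].
  assert (0 < pmf n p k * (IZR k * (1 - p) - (INR n - IZR k + 1) * p))
    by (apply Rmult_lt_0_compat; [apply pmf_gt0; lia|lra]).
  nra.
Qed.

Lemma pmf_log_concave j k : (1 <= j)%Z -> (j - 1 <= k)%Z -> (j <= Z.of_nat n)%Z ->
  pmf n p (k + 1) * pmf n p (j - 1) <= pmf n p j * pmf n p k.
Proof.
  intros Hj Hk Hjn.
  destruct (Z_lt_le_dec k (Z.of_nat n)) as [Hkn|Hkn].
  2:{ rewrite (pmf_outside (k + 1)) by lia.
      pose proof (pmf_ge0 j). pose proof (pmf_ge0 k). nra. }
  pose proof (pmf_ratio j ltac:(lia)) as R1.
  pose proof (pmf_ratio (k + 1) ltac:(lia)) as R2.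
  replace (k + 1 - 1)%Z with k in R2 by lia. rewrite plus_IZR in R2.
  assert (Hjk : IZR j <= IZR k + 1) by (rewrite <- plus_IZR; apply IZR_le; lia).
  assert (Hj1 : 1 <= IZR j) by (apply IZR_le; lia).
  pose proof (pmf_ge0 (j - 1)). pose proof (pmf_ge0 k).
  set (a := pmf n p (k + 1)) in *. set (b := pmf n p (j - 1)) in *.
  set (c := pmf n p j) in *. set (d := pmf n p k) in *.
  assert (E : (a * b - c * d) * ((IZR k + 1) * IZR j * (1 - p)) =
              b * d * p * ((INR n + 1) * (IZR j - (IZR k + 1)))).
  { transitivity ((a * (IZR k + 1) * (1 - p)) * b * IZR j - (c * IZR j * (1 - p)) * d * (IZR k + 1));
      [ring|]. rewrite R1, R2. ring. }
  assert (0 <= INR n) by apply pos_INR.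
  assert (b * d * p * ((INR n + 1) * (IZR j - (IZR k + 1))) <= 0).
  { assert (0 <= b * d * p) by (apply Rmult_le_pos; [apply Rmult_le_pos|]; lra).
    assert ((INR n + 1) * (IZR j - (IZR k + 1)) <= 0) by nra. nra. }
  assert (0 < (IZR k + 1) * IZR j * (1 - p)) by (apply Rmult_lt_0_compat; nra).
  destruct (Rle_or_lt (a * b) (c * d)); [lra|nra].
Qed.

Lemma qtail_log_concave j k : (1 <= j <= Z.of_nat n)%Z -> (j - 1 <= k)%Z ->
  qtail n p (k + 1) * pmf n p (j - 1) <= pmf n p j * qtail n p k.
Proof.
  intros Hj. revert k.
  apply (Z.left_induction' (fun k => (j - 1 <= k)%Z ->
           qtail n p (k + 1) * pmf n p (j - 1) <= pmf n p j * qtail n p k))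
    with (z := Z.of_nat n); [intros ? ? ->; reflexivity| |].
  - intros k Hk _. rewrite (qtail_gt_n (k + 1)) by lia.
    pose proof (pmf_ge0 j). pose proof (qtail_ge0 k). nra.
  - intros k Hkn IH Hk. rewrite <- Z.add_1_r in IH. specialize (IH ltac:(lia)).
    rewrite (qtail_succ (k + 1)), (qtail_succ k).
    pose proof (pmf_log_concave j k ltac:(lia) Hk ltac:(lia)). nra.
Qed.

Lemma qtail_mul_gap_le j : (1 <= j <= Z.of_nat n)%Z ->
  qtail n p j * (pmf n p (j - 1) - pmf n p j) <= pmf n p j * pmf n p (j - 1).
Proof.
  intros Hj. pose proof (qtail_log_concave j (j - 1) Hj ltac:(lia)) as H.
  replace (j - 1 + 1)%Z with j in H by lia. rewrite (qtail_succ (j - 1)) in H.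
  replace (j - 1 + 1)%Z with j in H by lia. nra.
Qed.

Lemma jstar_ge1 : (1 <= jstar n p)%Z.
Proof.
  unfold jstar. destruct (base_Int_part (INR (n + 1) * p)) as [H1 H2].
  assert (0 < INR (n + 1) * p) by (apply Rmult_lt_0_compat; [apply lt_0_INR; lia|lra]).
  assert (-1 < IZR (Int_part (INR (n + 1) * p))) as Hfl by lra.
  apply lt_IZR in Hfl. lia.
Qed.

Lemma lt_jstar k : (k < jstar n p)%Z -> IZR k <= INR (n + 1) * p.
Proof.
  unfold jstar. intros H. pose proof (Int_part_bounds (INR (n + 1) * p)).
  assert (IZR k <= IZR (Int_part (INR (n + 1) * p))) by (apply IZR_le; lia). lra.
Qed.

Lemma jstar_le k : (jstar n p <= k)%Z -> INR (n + 1) * p < IZR k.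
Proof.
  unfold jstar. intros H. pose proof (Int_part_bounds (INR (n + 1) * p)).
  assert (IZR (Int_part (INR (n + 1) * p)) + 1 <= IZR k) by (rewrite <- plus_IZR; apply IZR_le; lia).
  lra.
Qed.

Lemma QLin_affine k t : IZR k <= t <= IZR k + 1 ->
  QLin n p t = qtail n p k - (t - IZR k) * pmf n p k.
Proof.
  intros H. unfold QLin. destruct (Rlt_or_le t (IZR k + 1)).
  - rewrite (Int_part_eq t k) by lra. rewrite (qtail_succ k). ring.
  - rewrite (Int_part_eq t (k + 1)) by (rewrite plus_IZR; lra).
    rewrite plus_IZR, (qtail_succ k). replace t with (IZR k + 1) by lra. ring.
Qed.

Lemma QLin_nonpos t : t <= 0 -> QLin n p t = 1.
Proof.
  intros Ht. pose proof (Int_part_bounds t) as B.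
  assert (Hk : (Int_part t <= 0)%Z) by (apply le_IZR; lra).
  rewrite (QLin_affine (Int_part t)) by lra. rewrite qtail_nonpos by lia.
  destruct (Z.eq_dec (Int_part t) 0) as [E|E].
  - rewrite E in *. assert (t = 0) by lra. subst. ring.
  - rewrite pmf_outside by lia. ring.
Qed.

Lemma QLin_ge_succ_n t : INR n + 1 <= t -> QLin n p t = 0.
Proof.
  intros Ht. unfold QLin. pose proof (Int_part_bounds t) as B.
  assert (INR n < IZR (Int_part t)) as H by lra. rewrite INR_IZR_INZ in H.
  apply lt_IZR in H. rewrite !qtail_gt_n by lia. ring.
Qed.

Lemma QLin_gt0 t : t < INR n + 1 -> 0 < QLin n p t.
Proof.
  intros Ht. unfold QLin. pose proof (Int_part_bounds t).
  assert (IZR (Int_part t) < IZR (Z.of_nat n + 1)) as Hk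
    by (rewrite plus_IZR, <- INR_IZR_INZ; lra).
  apply lt_IZR in Hk.
  pose proof (qtail_gt0 (Int_part t) ltac:(lia)). pose proof (qtail_ge0 (Int_part t + 1)). nra.
Qed.

Definition beyond_mode (j : Z) : Prop := (jstar n p <= j <= Z.of_nat n)%Z.

Definition step_ratio (j : Z) : R := pmf n p j / pmf n p (j - 1).
Definition mills (j : Z) : R := qtail n p j / pmf n p j.

(* On [j-1, j] and [j, j+1] the function QLin has slopes [-p_(j-1)] and [-p_j]; the line
   [bitan_line j] is tangent to [ln QLin] at [bitan_lo j] and at [bitan_hi j], where QLin
   takes the values [p_(j-1) * bitan_scale j] and [p_j * bitan_scale j]. *)
Definition bitan_scale (j : Z) : R := mills j * logmean (step_ratio j).
Definition bitan_lo (j : Z) : R := IZR j + step_ratio j * mills j - bitan_scale j.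
Definition bitan_hi (j : Z) : R := IZR j + mills j - bitan_scale j.
Definition bitan_line (j : Z) (t : R) : R :=
  ln (pmf n p (j - 1) * bitan_scale j) - (t - bitan_lo j) / bitan_scale j.

Lemma beyond_mode_range j : beyond_mode j -> (1 <= j <= Z.of_nat n)%Z.
Proof. pose proof (jstar_ge1). unfold beyond_mode. lia. Qed.

Lemma beyond_mode_pmf j : beyond_mode j -> 0 < pmf n p j < pmf n p (j - 1).
Proof.
  intros Hj. pose proof (beyond_mode_range j Hj). split.
  - apply pmf_gt0; auto; lia.
  - apply pmf_lt_pred; auto. apply jstar_le. apply Hj.
Qed.

Lemma step_ratio_bounds j : beyond_mode j -> 0 < step_ratio j < 1.
Proof.
  intros Hj. pose proof (beyond_mode_pmf j Hj). unfold step_ratio. split.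
  - apply Rdiv_lt_0_compat; lra.
  - apply Rmult_lt_reg_r with (pmf n p (j - 1)); [lra|].
    unfold Rdiv. rewrite Rmult_assoc, Rinv_l; lra.
Qed.

Lemma mills_gt0 j : beyond_mode j -> 0 < mills j.
Proof.
  intros Hj. pose proof (beyond_mode_pmf j Hj). pose proof (beyond_mode_range j Hj).
  apply Rdiv_lt_0_compat; [apply qtail_gt0; auto; lia|lra].
Qed.

Lemma mills_mul_gap_le1 j : beyond_mode j -> mills j * (1 - step_ratio j) <= 1.
Proof.
  intros Hj. pose proof (beyond_mode_pmf j Hj).
  pose proof (qtail_mul_gap_le j (beyond_mode_range j Hj)) as T.
  unfold mills, step_ratio.
  replace (qtail n p j / pmf n p j * (1 - pmf n p j / pmf n p (j - 1))) with
    (qtail n p j * (pmf n p (j - 1) - pmf n p j) / (pmf n p j * pmf n p (j - 1))) by (field; lra).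
  apply Rmult_le_reg_r with (pmf n p j * pmf n p (j - 1)); [nra|].
  unfold Rdiv. rewrite Rmult_assoc, Rinv_l by nra. lra.
Qed.

Lemma bitan_scale_gt0 j : beyond_mode j -> 0 < bitan_scale j.
Proof.
  intros Hj. pose proof (logmean_bounds _ (step_ratio_bounds j Hj)).
  pose proof (step_ratio_bounds j Hj). apply Rmult_lt_0_compat; [apply mills_gt0; auto|lra].
Qed.

Lemma bitan_bounds j : beyond_mode j ->
  IZR j - 1 < bitan_lo j < IZR j /\ IZR j < bitan_hi j < IZR j + 1.
Proof.
  intros Hj. pose proof (step_ratio_bounds j Hj). pose proof (mills_gt0 j Hj).
  pose proof (mills_mul_gap_le1 j Hj). pose proof (logmean_bounds _ (step_ratio_bounds j Hj)).
  unfold bitan_lo, bitan_hi, bitan_scale.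
  set (r := step_ratio j) in *. set (v := mills j) in *. set (g := logmean r) in *.
  assert (v * r < v * g) by (apply Rmult_lt_compat_l; lra).
  assert (v * g < v * 1) by (apply Rmult_lt_compat_l; lra).
  assert (v * (g - r) < v * (1 - r)) by (apply Rmult_lt_compat_l; lra).
  assert (v * (1 - g) < v * (1 - r)) by (apply Rmult_lt_compat_l; lra).
  repeat split; nra.
Qed.

Lemma QLin_bitan_lo j : beyond_mode j ->
  QLin n p (bitan_lo j) = pmf n p (j - 1) * bitan_scale j.
Proof.
  intros Hj. pose proof (beyond_mode_pmf j Hj). pose proof (beyond_mode_range j Hj).
  destruct (bitan_bounds j Hj) as [Ha _].
  rewrite (QLin_affine (j - 1)) by (rewrite minus_IZR; lra).
  rewrite (qtail_succ (j - 1)). replace (j - 1 + 1)%Z with j by lia.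
  unfold bitan_lo, step_ratio, mills. rewrite minus_IZR. field. lra.
Qed.

Lemma QLin_bitan_hi j : beyond_mode j ->
  QLin n p (bitan_hi j) = pmf n p j * bitan_scale j.
Proof.
  intros Hj. pose proof (beyond_mode_pmf j Hj). destruct (bitan_bounds j Hj) as [_ Hb].
  rewrite (QLin_affine j) by lra. unfold bitan_hi, mills. field. lra.
Qed.

Lemma bitan_line_hi j : beyond_mode j ->
  bitan_line j (bitan_hi j) = ln (pmf n p j * bitan_scale j).
Proof.
  intros Hj. pose proof (beyond_mode_pmf j Hj). pose proof (step_ratio_bounds j Hj).
  pose proof (mills_gt0 j Hj). pose proof (bitan_scale_gt0 j Hj).
  pose proof (ln_lt_0 _ (step_ratio_bounds j Hj)).
  assert (Hchord : (bitan_hi j - bitan_lo j) / bitan_scale j = - ln (step_ratio j)).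
  { unfold bitan_hi, bitan_lo, bitan_scale, logmean. field. split; lra. }
  unfold bitan_line. rewrite Hchord, !ln_mult by lra.
  unfold step_ratio, Rdiv. rewrite ln_mult, ln_Rinv by (try apply Rinv_0_lt_compat; lra). ring.
Qed.

Lemma bitan_line_interp j t : beyond_mode j ->
  let d := (t - bitan_lo j) / (bitan_hi j - bitan_lo j) in
  bitan_line j t = (1 - d) * ln (pmf n p (j - 1) * bitan_scale j)
                   + d * ln (pmf n p j * bitan_scale j).
Proof.
  intros Hj d. destruct (bitan_bounds j Hj). pose proof (bitan_scale_gt0 j Hj).
  rewrite <- bitan_line_hi by auto. unfold d, bitan_line. field. lra.
Qed.

Lemma bitan_scale_succ_le j : beyond_mode j -> beyond_mode (j + 1) ->
  bitan_scale (j + 1) <= bitan_scale j.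
Proof.
  intros Hj Hj'. pose proof (beyond_mode_pmf j Hj). pose proof (beyond_mode_pmf (j + 1) Hj').
  pose proof (beyond_mode_range j Hj). pose proof (step_ratio_bounds j Hj). pose proof (step_ratio_bounds (j + 1) Hj').
  pose proof (mills_gt0 (j + 1) Hj'). pose proof (mills_mul_gap_le1 (j + 1) Hj').
  assert (Hrr : step_ratio (j + 1) <= step_ratio j).
  { pose proof (pmf_log_concave j j ltac:(lia) ltac:(lia) ltac:(lia)).
    unfold step_ratio. replace (j + 1 - 1)%Z with j by lia.
    apply Rmult_le_reg_r with (pmf n p j * pmf n p (j - 1)); [nra|].
    replace (pmf n p (j + 1) / pmf n p j * (pmf n p j * pmf n p (j - 1))) with
      (pmf n p (j + 1) * pmf n p (j - 1)) by (field; lra).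
    replace (pmf n p j / pmf n p (j - 1) * (pmf n p j * pmf n p (j - 1))) with
      (pmf n p j * pmf n p j) by (field; lra). lra. }
  assert (Ev : mills j = 1 + step_ratio (j + 1) * mills (j + 1)).
  { unfold mills, step_ratio. replace (j + 1 - 1)%Z with j by lia.
    rewrite (qtail_succ j). field. lra. }
  pose proof (logmean_le (step_ratio (j + 1)) (step_ratio j) ltac:(lra) ltac:(lra)).
  pose proof (logmean_bounds _ (step_ratio_bounds j Hj)).
  unfold bitan_scale. rewrite Ev.
  set (r := step_ratio j) in *. set (r' := step_ratio (j + 1)) in *. set (v' := mills (j + 1)) in *.
  nra.
Qed.

Lemma bitan_hi_le_lo j j' : beyond_mode j -> beyond_mode j' -> (j < j')%Z ->
  bitan_hi j <= bitan_lo j'.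
Proof.
  intros Hj Hj' Hjj. destruct (Z.eq_dec j' (j + 1)) as [->|E].
  - pose proof (bitan_scale_succ_le j Hj Hj'). pose proof (beyond_mode_pmf j Hj).
    pose proof (beyond_mode_pmf (j + 1) Hj').
    unfold bitan_hi, bitan_lo. rewrite plus_IZR.
    assert (step_ratio (j + 1) * mills (j + 1) = mills j - 1).
    { unfold step_ratio, mills. replace (j + 1 - 1)%Z with j by lia.
      rewrite (qtail_succ j). field. lra. }
    lra.
  - destruct (bitan_bounds j Hj). destruct (bitan_bounds j' Hj').
    assert (IZR j + 1 <= IZR j' - 1) by (rewrite <- plus_IZR, <- minus_IZR; apply IZR_le; lia).
    lra.
Qed.

Definition bitan_at (t : R) : option Z :=
  match excluded_middle_informative
          (exists j, beyond_mode j /\ bitan_lo j < t < bitan_hi j) with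
  | left H => Some (proj1_sig (constructive_indefinite_description _ H))
  | right _ => None
  end.

Lemma bitan_interval_unique j j' t : beyond_mode j -> beyond_mode j' ->
  bitan_lo j < t < bitan_hi j -> bitan_lo j' < t < bitan_hi j' -> j = j'.
Proof.
  intros Hj Hj' T T'. destruct (Z.lt_trichotomy j j') as [L|[L|L]]; auto.
  - pose proof (bitan_hi_le_lo j j' Hj Hj' L). lra.
  - pose proof (bitan_hi_le_lo j' j Hj' Hj L). lra.
Qed.

Lemma bitan_at_Some j t :
  bitan_at t = Some j <-> beyond_mode j /\ bitan_lo j < t < bitan_hi j.
Proof.
  unfold bitan_at. destruct excluded_middle_informative as [H|H].
  - destruct (constructive_indefinite_description _ H) as [j' [Hj' Ht']]. simpl. split.
    + intros E. injection E as <-. auto.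
    + intros [Hj Ht]. f_equal. eapply bitan_interval_unique; eauto.
  - split; [discriminate|]. intros Hj. exfalso. apply H. exists j. exact Hj.
Qed.

Lemma bitan_at_None t :
  bitan_at t = None <-> forall j, beyond_mode j -> ~ (bitan_lo j < t < bitan_hi j).
Proof.
  split.
  - intros E j Hj Ht. assert (bitan_at t = Some j) by (apply bitan_at_Some; auto). congruence.
  - intros H. destruct (bitan_at t) as [j|] eqn:E; [|reflexivity].
    apply bitan_at_Some in E as [Hj Ht]. exfalso. eapply H; eauto.
Qed.

Definition QLinLC (t : R) : R :=
  match bitan_at t with Some j => exp (bitan_line j t) | None => QLin n p t end.

Definition lnQLinLC (t : R) : R := ln (QLinLC t).

Lemma QLinLC_None t : bitan_at t = None -> QLinLC t = QLin n p t.
Proof. intros E. unfold QLinLC. rewrite E. reflexivity. Qed.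

(* Off the bitangent intervals this is the right derivative of [ln QLin]; for [t < 0] it is [0]
   since [pmf] vanishes at negative indices. *)
Definition lnQLinLC_slope (t : R) : R :=
  match bitan_at t with
  | Some j => - / bitan_scale j
  | None => - pmf n p (Int_part t) / QLin n p t
  end.

Definition beyond_mode_dec (j : Z) : {beyond_mode j} + {~ beyond_mode j}.
Proof.
  unfold beyond_mode.
  destruct (Z_le_dec (jstar n p) j), (Z_le_dec j (Z.of_nat n)); [left|right..]; lia.
Defined.

(* [[lin_lo k, lin_hi k]] is what remains of [[k, k+1]] outside the bitangent intervals. *)
Definition lin_lo (k : Z) : R := if beyond_mode_dec k then bitan_hi k else IZR k.
Definition lin_hi (k : Z) : R :=
  if beyond_mode_dec (k + 1) then bitan_lo (k + 1) else IZR k + 1.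

Lemma lin_lo_beyond k : beyond_mode k -> lin_lo k = bitan_hi k.
Proof. unfold lin_lo. destruct (beyond_mode_dec k); tauto. Qed.

Lemma lin_lo_not_beyond k : ~ beyond_mode k -> lin_lo k = IZR k.
Proof. unfold lin_lo. destruct (beyond_mode_dec k); tauto. Qed.

Lemma lin_hi_beyond k : beyond_mode (k + 1) -> lin_hi k = bitan_lo (k + 1).
Proof. unfold lin_hi. destruct (beyond_mode_dec (k + 1)); tauto. Qed.

Lemma lin_hi_not_beyond k : ~ beyond_mode (k + 1) -> lin_hi k = IZR k + 1.
Proof. unfold lin_hi. destruct (beyond_mode_dec (k + 1)); tauto. Qed.

Lemma lin_piece_bounds k : IZR k <= lin_lo k <= lin_hi k /\ lin_hi k <= IZR k + 1.
Proof.
  destruct (beyond_mode_dec k) as [Hk|Hk];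
    [rewrite lin_lo_beyond by auto; pose proof (bitan_bounds k Hk)|rewrite lin_lo_not_beyond by auto];
    (destruct (beyond_mode_dec (k + 1)) as [Hk'|Hk'];
      [rewrite lin_hi_beyond by auto; pose proof (bitan_bounds (k + 1) Hk'); rewrite plus_IZR in *
      |rewrite lin_hi_not_beyond by auto]); try lra.
  pose proof (bitan_hi_le_lo k (k + 1) Hk Hk' ltac:(lia)). lra.
Qed.

Lemma bitan_at_lin_piece k t : lin_lo k <= t <= lin_hi k -> bitan_at t = None.
Proof.
  intros Ht. apply bitan_at_None. intros j Hj Hd.
  pose proof (lin_piece_bounds k). pose proof (bitan_bounds j Hj).
  destruct (Z.lt_total j k) as [L|[->|L]].
  - assert (IZR j + 1 <= IZR k) by (rewrite <- plus_IZR; apply IZR_le; lia). lra.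
  - rewrite lin_lo_beyond in Ht by auto. lra.
  - destruct (Z.eq_dec j (k + 1)) as [->|E].
    + rewrite lin_hi_beyond in Ht by auto. lra.
    + assert (IZR k + 1 <= IZR j - 1) by (rewrite <- plus_IZR, <- minus_IZR; apply IZR_le; lia).
      lra.
Qed.

Local Notation supergrad_on_lnQLinLC := (supergrad_on lnQLinLC lnQLinLC_slope).

Lemma supergrad_on_lin_piece k y : (0 <= k)%Z -> y <= lin_hi k -> y < INR n + 1 ->
  supergrad_on_lnQLinLC (lin_lo k) y.
Proof.
  intros Hk Hy Hyn z w Hz Hzw Hw.
  destruct (lin_piece_bounds k) as [[B1 B2] B3].
  assert (Nz : bitan_at z = None) by (apply (bitan_at_lin_piece k); lra).
  assert (Nw : bitan_at w = None) by (apply (bitan_at_lin_piece k); lra).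
  set (c := qtail n p k + IZR k * pmf n p k). set (m := pmf n p k).
  assert (Qaff : forall t, lin_lo k <= t <= lin_hi k -> QLin n p t = c - m * t).
  { intros t Ht. rewrite (QLin_affine k) by lra. unfold c, m. ring. }
  assert (Qw : 0 < c - m * w) by (rewrite <- Qaff by lra; apply QLin_gt0; lra).
  apply supergrad_pair_transfer with (fun t => ln (c - m * t)) (fun t => - m / (c - m * t)).
  - exact Hzw.
  - unfold lnQLinLC. rewrite (QLinLC_None z Nz), Qaff by lra. reflexivity.
  - unfold lnQLinLC. rewrite (QLinLC_None w Nw), Qaff by lra. reflexivity.
  - unfold lnQLinLC_slope. rewrite Nz, (Int_part_eq z k), Qaff by lra. reflexivity.
  - unfold lnQLinLC_slope. rewrite Nw, Qaff by lra.
    destruct (Rlt_or_le w (IZR k + 1)) as [Hwk|Hwk].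
    + rewrite (Int_part_eq w k) by lra. apply Rle_refl.
    + (* [w = k + 1] is a kink of QLin below the mode, where the pmf increases *)
      rewrite (Int_part_eq w (k + 1)) by (rewrite plus_IZR; lra).
      assert (Hk1 : ~ beyond_mode (k + 1)).
      { intros Hb. rewrite lin_hi_beyond in Hy by auto.
        pose proof (bitan_bounds (k + 1) Hb). rewrite plus_IZR in *. lra. }
      assert (Hkn : (k + 1 <= Z.of_nat n)%Z).
      { assert (IZR (k + 1) < IZR (Z.of_nat n + 1)) as Hlt
          by (rewrite !plus_IZR, <- INR_IZR_INZ; lra).
        apply lt_IZR in Hlt. lia. }
      pose proof (pmf_pred_le (k + 1) ltac:(lia) (lt_jstar (k + 1) ltac:(unfold beyond_mode in Hk1; lia)))
        as Hinc.
      replace (k + 1 - 1)%Z with k in Hinc by lia. fold m in Hinc.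
      unfold Rdiv. apply Rmult_le_compat_r; [left; apply Rinv_0_lt_compat|]; lra.
  - apply supergrad_pair_ln_affine; [apply pmf_ge0|lra|lra].
Qed.

Lemma lnQLinLC_on_bitan j t : beyond_mode j -> bitan_lo j <= t <= bitan_hi j ->
  lnQLinLC t = bitan_line j t /\ lnQLinLC_slope t = - / bitan_scale j.
Proof.
  intros Hj Ht. pose proof (beyond_mode_pmf j Hj). pose proof (bitan_scale_gt0 j Hj).
  destruct (bitan_bounds j Hj) as [Ha Hb].
  destruct (Req_dec t (bitan_lo j)) as [->|Ea]; [|destruct (Req_dec t (bitan_hi j)) as [->|Eb]].
  - assert (N : bitan_at (bitan_lo j) = None).
    { apply (bitan_at_lin_piece (j - 1)). pose proof (lin_piece_bounds (j - 1)).
      rewrite lin_hi_beyond in * by (replace (j - 1 + 1)%Z with j by lia; auto).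
      replace (j - 1 + 1)%Z with j in * by lia. lra. }
    unfold lnQLinLC, QLinLC, lnQLinLC_slope. rewrite N, QLin_bitan_lo by auto.
    rewrite (Int_part_eq _ (j - 1)) by (rewrite minus_IZR; lra).
    unfold bitan_line. split; [|field]; lra.
  - assert (N : bitan_at (bitan_hi j) = None).
    { apply (bitan_at_lin_piece j). pose proof (lin_piece_bounds j).
      rewrite lin_lo_beyond in * by auto. lra. }
    unfold lnQLinLC, QLinLC, lnQLinLC_slope. rewrite N, QLin_bitan_hi, bitan_line_hi by auto.
    rewrite (Int_part_eq _ j) by lra. split; [|field]; lra.
  - assert (S : bitan_at t = Some j) by (apply bitan_at_Some; split; [auto|lra]).
    unfold lnQLinLC, QLinLC, lnQLinLC_slope. rewrite S, ln_exp. auto.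
Qed.

Lemma supergrad_on_bitan j y : beyond_mode j -> y <= bitan_hi j ->
  supergrad_on_lnQLinLC (bitan_lo j) y.
Proof.
  intros Hj Hy z w Hz Hzw Hw.
  destruct (lnQLinLC_on_bitan j z Hj ltac:(lra)) as [Fz Dz].
  destruct (lnQLinLC_on_bitan j w Hj ltac:(lra)) as [Fw Dw].
  unfold supergrad_pair. rewrite Fz, Fw, Dz, Dw. unfold bitan_line, Rdiv. repeat split; lra.
Qed.

Lemma supergrad_on_nonpos x y : y <= 0 -> supergrad_on_lnQLinLC x y.
Proof.
  intros Hy z w Hz Hzw Hw.
  assert (N : forall t, t <= 0 -> bitan_at t = None).
  { intros t Ht. apply bitan_at_None. intros j Hj Hd. destruct (bitan_bounds j Hj).
    pose proof (beyond_mode_range j Hj). assert (1 <= IZR j) by (apply IZR_le; lia). lra. }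
  assert (F : forall t, t <= 0 -> lnQLinLC t = 0).
  { intros t Ht. unfold lnQLinLC, QLinLC. rewrite N, QLin_nonpos by auto. apply ln_1. }
  assert (Dneg : forall t, t <= 0 -> lnQLinLC_slope t = - pmf n p (Int_part t)).
  { intros t Ht. unfold lnQLinLC_slope. rewrite N, QLin_nonpos by auto. field. }
  assert (Dz : lnQLinLC_slope z = 0).
  { rewrite Dneg by lra. rewrite pmf_outside; [ring|]. left.
    pose proof (Int_part_bounds z). apply lt_IZR. lra. }
  pose proof (pmf_ge0 (Int_part w)).
  unfold supergrad_pair. rewrite Dz, Dneg, !F by lra. repeat split; nra.
Qed.

Lemma supergrad_on_cell k y : (0 <= k)%Z -> y <= lin_lo (k + 1) -> y < INR n + 1 ->
  supergrad_on_lnQLinLC (lin_lo k) y.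
Proof.
  intros Hk Hy Hyn. destruct (Rle_or_lt y (lin_hi k)) as [Hyh|Hyh].
  - apply supergrad_on_lin_piece; auto.
  - destruct (beyond_mode_dec (k + 1)) as [Hb|Hb].
    + rewrite lin_hi_beyond in Hyh by auto. rewrite lin_lo_beyond in Hy by auto.
      apply supergrad_on_glue with (bitan_lo (k + 1)).
      * apply supergrad_on_lin_piece; auto; [rewrite lin_hi_beyond by auto|]; lra.
      * apply supergrad_on_bitan; auto.
    + rewrite lin_hi_not_beyond in Hyh by auto. rewrite lin_lo_not_beyond, plus_IZR in Hy by auto.
      lra.
Qed.

Lemma supergrad_on_below_lin_lo (K : nat) x y : y <= lin_lo (Z.of_nat K) -> y < INR n + 1 ->
  supergrad_on_lnQLinLC x y.
Proof.
  revert y. induction K as [|K IH]; intros y Hy Hyn.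
  - apply supergrad_on_nonpos. rewrite lin_lo_not_beyond in Hy; [exact Hy|].
    intros H0. pose proof (beyond_mode_range 0 H0). lia.
  - rewrite Nat2Z.inj_succ, <- Z.add_1_r in Hy.
    destruct (Rle_or_lt y (lin_lo (Z.of_nat K))) as [Hle|Hlt]; [apply IH; auto|].
    apply supergrad_on_glue with (lin_lo (Z.of_nat K)).
    + apply IH; lra.
    + apply supergrad_on_cell; auto; lia.
Qed.

Lemma lnQLinLC_supergrad z w : z < w -> w < INR n + 1 ->
  supergrad_pair lnQLinLC lnQLinLC_slope z w.
Proof.
  intros Hzw Hw. apply (supergrad_on_below_lin_lo (S n) z w); auto; try lra.
  rewrite lin_lo_not_beyond by (unfold beyond_mode; lia).
  rewrite <- INR_IZR_INZ, S_INR. lra.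
Qed.

Lemma QLin_le_QLinLC t : QLin n p t <= QLinLC t.
Proof.
  unfold QLinLC. destruct (bitan_at t) as [j|] eqn:E; [|lra].
  apply bitan_at_Some in E as [Hj Ht].
  pose proof (beyond_mode_pmf j Hj). pose proof (beyond_mode_range j Hj).
  pose proof (bitan_scale_gt0 j Hj). destruct (bitan_bounds j Hj) as [Ha Hb].
  assert (Hq : 0 < QLin n p t).
  { apply QLin_gt0. assert (IZR j <= INR n) by (rewrite INR_IZR_INZ; apply IZR_le; lia). lra. }
  rewrite <- (exp_ln _ Hq). apply exp_le_compat.
  (* [ln QLin] lies below its tangent at [bitan_lo j] on [j-1, j] and at [bitan_hi j] on [j, j+1] *)
  destruct (Rle_or_lt t (IZR j)).
  - pose proof (QLin_bitan_lo j Hj) as Qa.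
    assert (Dif : QLin n p t - QLin n p (bitan_lo j) = - pmf n p (j - 1) * (t - bitan_lo j)).
    { rewrite !(QLin_affine (j - 1)) by (rewrite minus_IZR; lra). ring. }
    pose proof (ln_sub_le_div (QLin n p (bitan_lo j)) (QLin n p t) ltac:(rewrite Qa; nra) Hq) as U.
    rewrite Dif, Qa in U. unfold bitan_line.
    replace (- pmf n p (j - 1) * (t - bitan_lo j) / (pmf n p (j - 1) * bitan_scale j))
      with (- ((t - bitan_lo j) / bitan_scale j)) in U by (field; lra). lra.
  - pose proof (QLin_bitan_hi j Hj) as Qb.
    assert (Dif : QLin n p t - QLin n p (bitan_hi j) = - pmf n p j * (t - bitan_hi j)).
    { rewrite !(QLin_affine j) by lra. ring. }
    pose proof (ln_sub_le_div (QLin n p (bitan_hi j)) (QLin n p t) ltac:(rewrite Qb; nra) Hq) as U.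
    rewrite Dif, Qb, <- bitan_line_hi in U by auto. unfold bitan_line in *.
    replace (- pmf n p j * (t - bitan_hi j) / (pmf n p j * bitan_scale j))
      with (- ((t - bitan_hi j) / bitan_scale j)) in U by (field; lra).
    unfold Rdiv in *. lra.
Qed.

Lemma QLinLC_ge_succ_n t : INR n + 1 <= t -> QLinLC t = 0.
Proof.
  intros Ht. rewrite QLinLC_None; [apply QLin_ge_succ_n; auto|].
  apply bitan_at_None. intros j Hj Hd. destruct (bitan_bounds j Hj).
  pose proof (beyond_mode_range j Hj).
  assert (IZR j <= INR n) by (rewrite INR_IZR_INZ; apply IZR_le; lia). lra.
Qed.

Lemma QLinLC_gt0 t : t < INR n + 1 -> 0 < QLinLC t.
Proof. intros Ht. pose proof (QLin_le_QLinLC t). pose proof (QLin_gt0 t Ht). lra. Qed.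

Lemma QLinLC_log_concave : log_concave QLinLC.
Proof.
  apply (log_concave_of_ln_concave QLinLC (INR n + 1)).
  - exact QLinLC_gt0.
  - exact QLinLC_ge_succ_n.
  - exact (supergrad_concave lnQLinLC lnQLinLC_slope (INR n + 1) lnQLinLC_supergrad).
Qed.

Lemma QLinLC_on_bitan j t : beyond_mode j -> bitan_lo j < t < bitan_hi j ->
  let d := (t - bitan_lo j) / (bitan_hi j - bitan_lo j) in
  QLinLC t = exp ((1 - d) * ln (pmf n p (j - 1) * bitan_scale j)
                  + d * ln (pmf n p j * bitan_scale j)).
Proof.
  intros Hj Ht d. unfold QLinLC.
  rewrite (proj2 (bitan_at_Some j t) (conj Hj Ht)), bitan_line_interp by auto. reflexivity.
Qed.

Lemma QLinLC_least g : LC_majorant (QLin n p) g -> forall t, QLinLC t <= g t.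
Proof.
  intros [Hg Hmaj] t. destruct (bitan_at t) as [j|] eqn:E.
  2:{ rewrite QLinLC_None by auto. apply Hmaj. }
  apply bitan_at_Some in E as [Hj Ht]. rewrite (QLinLC_on_bitan j t Hj Ht).
  pose proof (beyond_mode_pmf j Hj). pose proof (bitan_scale_gt0 j Hj).
  destruct (bitan_bounds j Hj).
  set (d := (t - bitan_lo j) / (bitan_hi j - bitan_lo j)).
  assert (Hd : 0 < d < 1).
  { unfold d. split; [apply Rdiv_lt_0_compat; lra|].
    apply Rmult_lt_reg_r with (bitan_hi j - bitan_lo j); [lra|].
    unfold Rdiv. rewrite Rmult_assoc, Rinv_l by lra. lra. }
  replace (g t) with (g ((1 - d) * bitan_lo j + d * bitan_hi j)) by (f_equal; unfold d; field; lra).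
  apply log_concave_ge_interp; auto.
  - split; [nra|]. rewrite <- QLin_bitan_lo by auto. apply Hmaj.
  - split; [nra|]. rewrite <- QLin_bitan_hi by auto. apply Hmaj.
Qed.

Lemma ln_pmf_pred_ratio j : beyond_mode j -> ln (pmf n p (j - 1) / pmf n p j) = - ln (step_ratio j).
Proof.
  intros Hj. pose proof (beyond_mode_pmf j Hj). unfold step_ratio.
  rewrite <- ln_Rinv by (apply Rdiv_lt_0_compat; lra). f_equal. field. lra.
Qed.

Lemma yj_eq j : beyond_mode j -> yj n p j = bitan_lo j - 1/2.
Proof.
  intros Hj. pose proof (beyond_mode_pmf j Hj). pose proof (beyond_mode_range j Hj).
  pose proof (ln_lt_0 _ (step_ratio_bounds j Hj)).
  unfold yj. destruct (Z.leb_spec j (Z.of_nat n)); [|lia].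
  rewrite ln_pmf_pred_ratio by auto.
  unfold bitan_lo, bitan_scale, logmean, mills, step_ratio in *. field. lra.
Qed.

Lemma xj_eq j : beyond_mode j -> xj n p j = bitan_hi j - 1/2.
Proof.
  intros Hj. pose proof (beyond_mode_pmf j Hj). pose proof (beyond_mode_range j Hj).
  pose proof (ln_lt_0 _ (step_ratio_bounds j Hj)).
  unfold xj. destruct (Z.leb_spec j (Z.of_nat n)); [|lia].
  rewrite ln_pmf_pred_ratio by auto.
  unfold bitan_hi, bitan_scale, logmean, mills, step_ratio in *. field. lra.
Qed.

Lemma in_delta_iff j x : beyond_mode j ->
  in_delta n p j x <-> bitan_lo j < x + 1/2 < bitan_hi j.
Proof. intros Hj. unfold in_delta. rewrite yj_eq, xj_eq by auto. lra. Qed.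

Lemma QLinLC_in_delta j x : beyond_mode j -> in_delta n p j x ->
  QLinLC (x + 1/2) = QInterp n p x j.
Proof.
  intros Hj Hd. apply in_delta_iff in Hd; auto.
  pose proof (beyond_mode_pmf j Hj). pose proof (bitan_scale_gt0 j Hj).
  destruct (bitan_bounds j Hj).
  rewrite (QLinLC_on_bitan j (x + 1/2) Hj Hd).
  unfold QInterp. rewrite yj_eq, xj_eq by auto.
  replace (bitan_lo j - 1/2 + 1/2) with (bitan_lo j) by ring.
  replace (bitan_hi j - 1/2 + 1/2) with (bitan_hi j) by ring.
  rewrite QLin_bitan_lo, QLin_bitan_hi by auto.
  unfold powr, Rpower.
  destruct (Req_EM_T (pmf n p (j - 1) * bitan_scale j) 0); [nra|].
  destruct (Req_EM_T (pmf n p j * bitan_scale j) 0); [nra|].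
  rewrite <- exp_plus. f_equal.
  replace ((x - (bitan_lo j - 1/2)) / (bitan_hi j - 1/2 - (bitan_lo j - 1/2)))
    with ((x + 1/2 - bitan_lo j) / (bitan_hi j - bitan_lo j)) by (field; lra).
  ring.
Qed.

Lemma QLinLC_off_delta x : (forall j, beyond_mode j -> ~ in_delta n p j x) ->
  QLinLC (x + 1/2) = QLin n p (x + 1/2).
Proof.
  intros H. apply QLinLC_None, bitan_at_None. intros j Hj Hd. apply (H j Hj), in_delta_iff; auto.
Qed.

End BinomialTail.

Theorem proposition2p10 (n : nat) (p : R) :
  (1 <= n)%nat -> 0 < p < 1 ->
  exists G : R -> R,
    least_LC_majorant (QLin n p) G /\
    forall x : R,
      (forall j : Z, (jstar n p <= j <= Z.of_nat n)%Z -> in_delta n p j x ->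
         G (x + 1/2) = QInterp n p x j) /\
      ((forall j : Z, (jstar n p <= j <= Z.of_nat n)%Z -> ~ in_delta n p j x) ->
         G (x + 1/2) = QLin n p (x + 1/2)).
Proof.
  intros _ Hp. exists (QLinLC n p). split.
  - split.
    + split; [apply QLinLC_log_concave, Hp|apply QLin_le_QLinLC, Hp].
    + apply QLinLC_least, Hp.
  - intros x. split.
    + intros j. exact (QLinLC_in_delta n p Hp j x).
    + exact (QLinLC_off_delta n p Hp x).
Qed.
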